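(* Let $p,d\in C^{2}([0,\infty),\mathbb{R})$, $b\in C^2([0,\infty),\mathbb{C})$, $c\in C^1([0,\infty),\mathbb{C})$, $q\in C([0,\infty),\mathbb{R})$ with $p>0$ on $[0,\infty)$, and assume: (B1) the (possibly improper) limit $d_\infty:=\lim_{t\to\infty}d(t)\in\mathbb{R}\cup\{\pm\infty\}$ exists; (B2) there are constants $\beta,\gamma>0$ with $|b(t)|\le\beta(|d(t)|+1)$ and $|c(t)|\le\gamma(|d(t)|+1)$ for all $t\ge0$; (B3a) for some $\lambda\in\mathbb{R}\setminus\{d_\infty\}$ there is $t_\lambda\ge0$ with $\lambda\notin d([t_\lambda,\infty))$ and $\pi(\cdot,\lambda)$ bounded on $[t_\lambda,\infty)$; (B3b) for every $\lambda\in\mathbb{R}\setminus(\overline{\Delta([0,\infty))}\cup\{d_\infty\})$ there is $t_\lambda\ge0$ with $\lambda\notin d([t_\lambda,\infty))$ and $\rho(\cdot,\lambda)$, $\kappa(\cdot,\lambda)$, $1/\pi(\cdot,\lambda)$ bounded on $[t_\lambda,\infty)$; (C) for every $\lambda\in\mathbb{R}\setminus(\overline{\Delta([0,\infty))}\cup\{d_\infty\})$ the limits $\lim_{t\to\infty}\frac{\rho(t,\lambda)}{\pi(t,\lambda)}$ and $\lim_{t\to\infty}\frac{\kappa(t,\lambda)}{\pi(t,\lambda)}$ exist and are finite. Then for every $\lambda\in\mathbb{R}\setminus(\overline{\Delta([0,\infty))}\cup\{d_\infty\})$ the limits below exist, are finite and satisfy $$\lim_{t\to\infty}\frac{\frac{\partial}{\partial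 t}\pi(t,\lambda)}{\pi(t,\lambda)}=0,\qquad \lim_{t\to\infty}\frac{\rho(t,\lambda)}{\pi(t,\lambda)}\in\mathbb{R},\qquad \lim_{t\to\infty}\frac{\kappa(t,\lambda)}{\pi(t,\lambda)}\in\mathbb{R}.$$
   Context: Notation: $\Delta(t):=d(t)-|b(t)|^2/p(t)$. For $t$ with $d(t)\ne\lambda$: $\pi(t,\lambda):=p(t)-\frac{|b(t)|^2}{d(t)-\lambda}$, $\rho(t,\lambda):=-\frac{2\operatorname{Im}(b(t)\overline{c(t)})}{d(t)-\lambda}+i\frac{\partial}{\partial t}\pi(t,\lambda)$, $\kappa(t,\lambda):=q(t)-\lambda-\frac{|c(t)|^2}{d(t)-\lambda}+\frac{\partial}{\partial t}\Big(\frac{\overline{b(t)}c(t)}{d(t)-\lambda}\Big)$. The overline on a set denotes closure in $\mathbb{R}$. *)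

From Stdlib Require Import Reals.
From Coquelicot Require Import Coquelicot.
Open Scope R_scope.

(* f : R -> R is C^k on (an open neighbourhood of) [0,oo):
   at every t >= 0 the derivatives of order < k exist near t and the k-th
   derivative is continuous at t. *)
Definition Ck_half (k : nat) (f : R -> R) : Prop :=
  forall t, 0 <= t ->
    (forall j, (j < k)%nat -> locally t (fun s => ex_derive (Derive_n f j) s)) /\
    continuous (Derive_n f k) t.

Definition Ck_half_C (k : nat) (f : R -> C) : Prop :=
  Ck_half k (fun t => Re (f t)) /\ Ck_half k (fun t => Im (f t)).

Definition CDerive (f : R -> C) (t : R) : C :=
  (Derive (fun s => Re (f s)) t, Derive (fun s => Im (f s)) t).

Definition Delta (p d : R -> R) (b : R -> C) (t : R) : R :=
  d t - (Cmod (b t)) ^ 2 / p t.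

Definition pi_fn (p d : R -> R) (b : R -> C) (lam t : R) : R :=
  p t - (Cmod (b t)) ^ 2 / (d t - lam).

Definition rho_fn (p d : R -> R) (b c : R -> C) (lam t : R) : C :=
  (- 2 * Im (Cmult (b t) (Cconj (c t))) / (d t - lam),
   Derive (pi_fn p d b lam) t).

Definition kappa_fn (p d q : R -> R) (b c : R -> C) (lam t : R) : C :=
  Cplus (RtoC (q t - lam - (Cmod (c t)) ^ 2 / (d t - lam)))
        (CDerive (fun s => Cdiv (Cmult (Cconj (b s)) (c s)) (RtoC (d s - lam))) t).

Definition in_closure (S : R -> Prop) (x : R) : Prop :=
  forall eps, 0 < eps -> exists y, S y /\ Rabs (y - x) < eps.

Definition Delta_image (p d : R -> R) (b : R -> C) (y : R) : Prop :=
  exists t, 0 <= t /\ y = Delta p d b t.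

Definition admissible (p d : R -> R) (b : R -> C) (dinf : Rbar) (lam : R) : Prop :=
  ~ in_closure (Delta_image p d b) lam /\ Finite lam <> dinf.

From Pilot Require Import Defs.
From Stdlib Require Import Reals Lra Psatz.
From Coquelicot Require Import Coquelicot.
Open Scope R_scope.

(* Since [Im (rho/pi) = pi'/pi] and [Im (kappa/pi) = g'/pi] with
   [g = Im (conj b c / (d - lam)) = Re rho / 2], it suffices to show that both limits
   have zero imaginary part.  For admissible [lam], [pi] is eventually bounded (compare
   it with [pi(., lam0)] of (B3a), using (B2) and [lam, lam0 <> d_inf]) and bounded away
   from zero by (B3b), and [g] is bounded.  By the mean value theorem a bounded [h]
   cannot have [h' / pi^2] tend to a nonzero limit, as [pi^2] is bounded below; applied
   to [h = pi^2] and then to [h = g pi], with [(g pi)' / pi^2 = g'/pi + (g/pi) (pi'/pi)],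
   this kills both imaginary parts. *)

Lemma bounded_derive_ge_pos_False (h : R -> R) (a B : R) : 0 < a ->
  Rbar_locally p_infty (fun t => ex_derive h t /\ a <= Derive h t /\ Rabs (h t) <= B) ->
  False.
Proof.
  intros Ha [T HT].
  set (t0 := T + 1). set (t1 := t0 + (2 * B + 1) / a).
  assert (Hder : forall x, t0 <= x -> ex_derive h x /\ a <= Derive h x /\ Rabs (h x) <= B)
    by (intros x Hx; apply HT; unfold t0 in Hx; lra).
  destruct (Hder t0) as [_ [_ H0]]; [lra|].
  assert (HB : 0 <= B) by (pose proof (Rabs_pos (h t0)); lra).
  assert (Hlen : a * (t1 - t0) = 2 * B + 1) by (unfold t1; field; lra).
  assert (Ht01 : t0 < t1)
    by (unfold t1; assert (0 < (2 * B + 1) / a) by (apply Rdiv_lt_0_compat; lra); lra).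
  destruct (MVT_gen h t0 t1 (Derive h)) as [xi [Hxi Heq]].
  - intros x Hx. rewrite Rmin_left, Rmax_right in Hx by lra.
    apply Derive_correct, Hder; lra.
  - intros x Hx. rewrite Rmin_left, Rmax_right in Hx by lra.
    apply continuity_pt_filterlim, (ex_derive_continuous (V := R_NormedModule)), Hder; lra.
  - rewrite Rmin_left, Rmax_right in Hxi by lra.
    destruct (Hder xi) as [_ [Hxi_a _]]; [lra|].
    destruct (Hder t1) as [_ [_ H1]]; [lra|].
    apply Rabs_le_between in H0. apply Rabs_le_between in H1.
    nra.
Qed.

(* If [h'/w] tends to [l <> 0] with [w] bounded below, then [l h'] is eventually
   bounded below by a positive constant, which a bounded [h] cannot afford. *)
Lemma is_lim_derive_div_eq0 (h w : R -> R) (l m B : R) : 0 < m ->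
  Rbar_locally p_infty (fun t => ex_derive h t /\ Rabs (h t) <= B /\ m <= w t) ->
  is_lim (fun t => Derive h t / w t) p_infty l -> l = 0.
Proof.
  intros Hm Hev Hlim.
  destruct (Req_dec l 0) as [|Hl]; [assumption|exfalso].
  assert (Hl2 : 0 < Rabs l / 2) by (pose proof (Rabs_pos_lt l Hl); lra).
  apply is_lim_spec in Hlim.
  apply (bounded_derive_ge_pos_False (fun t => l * h t) (l ^ 2 * m / 2) (Rabs l * B)).
  { assert (0 < l ^ 2) by (apply pow2_gt_0; exact Hl). nra. }
  eapply filter_imp; [|exact (filter_and _ _ Hev (Hlim (mkposreal _ Hl2)))].
  simpl. intros t [[Hd [Hb Hw]] Hr].
  split; [apply ex_derive_scal; exact Hd|].
  rewrite Derive_scal, Rabs_mult. split; [|apply Rmult_le_compat_l; [apply Rabs_pos|exact Hb]].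
  set (r := Derive h t / w t) in Hr.
  assert (Ehr : Derive h t = r * w t) by (unfold r; field; lra).
  assert (Hlr : l ^ 2 / 2 <= l * r).
  { apply Rabs_def2 in Hr.
    destruct (Rle_lt_dec 0 l); [rewrite Rabs_right in Hr by lra|rewrite Rabs_left in Hr by lra];
      nra. }
  rewrite Ehr. nra.
Qed.

Lemma is_lim_bounded_mult_0 (u v : R -> R) (C : R) :
  Rbar_locally p_infty (fun t => Rabs (u t) <= C) -> is_lim v p_infty 0 ->
  is_lim (fun t => u t * v t) p_infty 0.
Proof.
  intros Hu Hv. apply is_lim_spec in Hv. apply is_lim_spec. intros eps.
  assert (Heps : 0 < eps / (Rabs C + 1)) by (apply Rdiv_lt_0_compat; [apply cond_pos|pose proof (Rabs_pos C); lra]).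
  eapply filter_imp; [|exact (filter_and _ _ Hu (Hv (mkposreal _ Heps)))].
  simpl. intros t [HuC Hvt]. rewrite !Rminus_0_r in *. rewrite Rabs_mult.
  pose proof (cond_pos eps). pose proof (Rabs_pos (u t)). pose proof (Rabs_pos (v t)).
  pose proof (Rle_abs C).
  assert (E : Rabs (v t) * (Rabs C + 1) < eps).
  { apply (Rmult_lt_compat_r (Rabs C + 1)) in Hvt; [|pose proof (Rabs_pos C); lra].
    unfold Rdiv in Hvt. rewrite Rmult_assoc, Rinv_l in Hvt by (pose proof (Rabs_pos C); lra). lra. }
  nra.
Qed.

Lemma sqr_ge_of_Rabs_inv_le (x M : R) : x <> 0 -> Rabs (/ x) <= M -> / (M ^ 2 + 1) <= x * x.
Proof.
  intros Hx HM. rewrite Rabs_inv in HM.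
  assert (Hax : 0 < Rabs x) by (apply Rabs_pos_lt; exact Hx).
  assert (H1 : 1 <= M * Rabs x).
  { apply (Rmult_le_compat_r (Rabs x)) in HM; [|lra]. rewrite Rinv_l in HM by lra. exact HM. }
  assert (Ex : Rabs x * Rabs x = x * x) by (rewrite <- Rabs_mult; apply Rabs_right; nra).
  assert (HM2 : 0 < M ^ 2 + 1) by nra.
  apply (Rmult_le_reg_l (M ^ 2 + 1)); [exact HM2|]. rewrite Rinv_r by lra. nra.
Qed.

Section BoundedAwayFromZero.

Variables (P g : R -> R) (B M G : R).

Hypothesis HP : Rbar_locally p_infty
  (fun t => ex_derive P t /\ P t <> 0 /\ Rabs (P t) <= B /\ Rabs (/ P t) <= M).

Lemma log_derive_lim_eq0 (l : R) : is_lim (fun t => Derive P t / P t) p_infty l -> l = 0.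
Proof.
  intros Hl.
  enough (2 * l = 0) by lra.
  apply (is_lim_derive_div_eq0 (fun t => P t * P t) (fun t => P t * P t) _ (/ (M ^ 2 + 1)) (B * B)).
  - apply Rinv_0_lt_compat. nra.
  - eapply filter_imp; [|exact HP]. intros t [Hd [HP0 [HPB HPM]]].
    split; [apply ex_derive_mult; exact Hd|].
    split; [|apply sqr_ge_of_Rabs_inv_le; assumption].
    rewrite Rabs_mult. apply Rmult_le_compat; auto using Rabs_pos.
  - apply is_lim_ext_loc with (fun t => 2 * (Derive P t / P t)); [|exact (is_lim_scal_l _ 2 _ _ Hl)].
    eapply filter_imp; [|exact HP]. intros t [Hd [HP0 _]].
    rewrite Derive_mult by exact Hd. field. exact HP0.
Qed.

Hypothesis Hg : Rbar_locally p_infty (fun t => ex_derive g t /\ Rabs (g t) <= G).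

Lemma derive_div_lim_eq0 (l : R) : is_lim (fun t => Derive P t / P t) p_infty 0 ->
  is_lim (fun t => Derive g t / P t) p_infty l -> l = 0.
Proof.
  intros HlogP Hl.
  apply (is_lim_derive_div_eq0 (fun t => g t * P t) (fun t => P t * P t) _ (/ (M ^ 2 + 1)) (G * B)).
  - apply Rinv_0_lt_compat. nra.
  - eapply filter_imp; [|exact (filter_and _ _ HP Hg)]. intros t [[Hd [HP0 [HPB HPM]]] [Hdg HgG]].
    split; [apply ex_derive_mult; assumption|].
    split; [|apply sqr_ge_of_Rabs_inv_le; assumption].
    rewrite Rabs_mult. apply Rmult_le_compat; auto using Rabs_pos.
  - apply is_lim_ext_loc with (fun t => Derive g t / P t + g t * / P t * (Derive P t / P t)).
    + eapply filter_imp; [|exact (filter_and _ _ HP Hg)]. intros t [[Hd [HP0 _]] [Hdg _]].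
      rewrite Derive_mult by assumption. field. exact HP0.
    + replace (Finite l) with (Rbar_plus l 0) by (simpl; f_equal; ring).
      apply (is_lim_plus _ _ _ l 0); [exact Hl| |reflexivity].
      apply (is_lim_bounded_mult_0 _ _ (G * M)); [|exact HlogP].
      eapply filter_imp; [|exact (filter_and _ _ HP Hg)]. intros t [[_ [_ [_ HPM]]] [_ HgG]].
      rewrite Rabs_mult. apply Rmult_le_compat; auto using Rabs_pos.
Qed.

End BoundedAwayFromZero.

Lemma Im_Cdiv_RtoC (z : C) (r : R) : Im (Cdiv z (RtoC r)) = Im z / r.
Proof.
  destruct z as [z1 z2]. unfold Cdiv, Cmult, Cinv, RtoC, Im; simpl.
  destruct (Req_dec r 0) as [->|Hr].
  - unfold Rdiv. rewrite !Rmult_0_l, !Rmult_0_r, !Rplus_0_l, Rinv_0. ring.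
  - field. exact Hr.
Qed.

Lemma is_lim_Im (f : R -> C) (L : C) :
  filterlim f (Rbar_locally p_infty) (locally L) -> is_lim (fun t => Im (f t)) p_infty (Im L).
Proof.
  intros Hf. apply (filterlim_comp _ _ _ f snd _ (locally L)); [exact Hf|].
  intros Q [e He]. exists e. intros y Hy. apply He, Hy.
Qed.

Lemma is_lim_neq_dist_bound (d : R -> R) (dinf : Rbar) (mu : R) :
  is_lim d p_infty dinf -> Finite mu <> dinf ->
  exists K, Rbar_locally p_infty (fun t => Rabs (d t) + 1 <= K * Rabs (d t - mu)).
Proof.
  intros Hl Hne. apply is_lim_spec in Hl.
  destruct dinf as [D| |]; simpl in Hl.
  - assert (HD : D <> mu) by (intro; subst; apply Hne; reflexivity).
    set (e := Rabs (D - mu) / 2).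
    assert (He : 0 < e) by (unfold e; pose proof (Rabs_pos_lt (D - mu)); lra).
    exists ((Rabs D + e + 1) / e).
    eapply filter_imp; [|exact (Hl (mkposreal e He))]. simpl. intros t Ht.
    assert (H1 : e <= Rabs (d t - mu)).
    { pose proof (Rabs_triang (D - d t) (d t - mu)) as Htri.
      replace (D - d t + (d t - mu)) with (D - mu) in Htri by ring.
      rewrite Rabs_minus_sym in Ht. unfold e in *. lra. }
    assert (H2 : Rabs (d t) <= Rabs D + e).
    { pose proof (Rabs_triang (d t - D) D) as Htri.
      replace (d t - D + D) with (d t) in Htri by ring. lra. }
    apply Rle_trans with ((Rabs D + e + 1) / e * e).
    + replace ((Rabs D + e + 1) / e * e) with (Rabs D + e + 1) by (field; lra). lra.
    + apply Rmult_le_compat_l; [|exact H1].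
      apply Rlt_le, Rdiv_lt_0_compat; [pose proof (Rabs_pos D)|]; lra.
  - exists 2. eapply filter_imp; [|exact (Hl (2 * Rabs mu + 1))]. intros t Ht.
    pose proof (Rabs_pos mu). pose proof (Rle_abs mu).
    rewrite (Rabs_right (d t)), (Rabs_right (d t - mu)) by lra. lra.
  - exists 2. eapply filter_imp; [|exact (Hl (- (2 * Rabs mu + 1)))]. intros t Ht.
    pose proof (Rabs_pos mu). pose proof (Rle_abs (- mu)). rewrite Rabs_Ropp in *.
    rewrite (Rabs_left (d t)), (Rabs_left (d t - mu)) by lra. lra.
Qed.

Lemma Rabs_div_sub_div_le (X u v K : R) : u <> 0 -> v <> 0 -> 0 <= X ->
  X <= K * Rabs u * Rabs v -> Rabs (X / v - X / u) <= K * Rabs (u - v).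
Proof.
  intros Hu Hv HX HK.
  replace (X / v - X / u) with (X * (u - v) / (u * v)) by (field; auto).
  unfold Rdiv. rewrite !Rabs_mult, Rabs_inv, Rabs_mult, (Rabs_right X) by lra.
  assert (Pu : 0 < Rabs u) by (apply Rabs_pos_lt; exact Hu).
  assert (Pv : 0 < Rabs v) by (apply Rabs_pos_lt; exact Hv).
  apply (Rmult_le_reg_r (Rabs u * Rabs v)); [nra|].
  rewrite Rmult_assoc, Rinv_l by nra.
  pose proof (Rabs_pos (u - v)). nra.
Qed.

Lemma Rabs_pi_fn_sub_le (p d : R -> R) (b : R -> C) (lam lam0 beta K K0 t : R) : 0 <= beta ->
  Cmod (b t) <= beta * (Rabs (d t) + 1) ->
  Rabs (d t) + 1 <= K * Rabs (d t - lam) -> Rabs (d t) + 1 <= K0 * Rabs (d t - lam0) ->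
  Rabs (pi_fn p d b lam t - pi_fn p d b lam0 t) <= beta ^ 2 * K * K0 * Rabs (lam - lam0).
Proof.
  intros Hbeta Hb HK HK0.
  pose proof (Rabs_pos (d t)). pose proof (Cmod_ge_0 (b t)).
  assert (Hu : d t - lam <> 0) by (intro E; rewrite E, Rabs_R0 in HK; lra).
  assert (Hv : d t - lam0 <> 0) by (intro E; rewrite E, Rabs_R0 in HK0; lra).
  replace (pi_fn p d b lam t - pi_fn p d b lam0 t)
    with (Cmod (b t) ^ 2 / (d t - lam0) - Cmod (b t) ^ 2 / (d t - lam)) by (unfold pi_fn; ring).
  replace (Rabs (lam - lam0)) with (Rabs ((d t - lam) - (d t - lam0)))
    by (rewrite Rabs_minus_sym; f_equal; ring).
  apply Rabs_div_sub_div_le; [exact Hu|exact Hv|apply pow2_ge_0|].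
  assert (E1 : Cmod (b t) <= beta * K * Rabs (d t - lam))
    by (rewrite Rmult_assoc; eapply Rle_trans; [exact Hb|apply Rmult_le_compat_l; lra]).
  assert (E2 : Cmod (b t) <= beta * K0 * Rabs (d t - lam0))
    by (rewrite Rmult_assoc; eapply Rle_trans; [exact Hb|apply Rmult_le_compat_l; lra]).
  replace (beta ^ 2 * K * K0 * Rabs (d t - lam) * Rabs (d t - lam0))
    with ((beta * K * Rabs (d t - lam)) * (beta * K0 * Rabs (d t - lam0))) by ring.
  simpl. rewrite Rmult_1_r. apply Rmult_le_compat; assumption.
Qed.

Lemma pi_fn_bounded_shift (p d : R -> R) (b : R -> C) (dinf : Rbar) (beta lam lam0 M0 : R) :
  0 <= beta -> is_lim d p_infty dinf ->
  (forall t, 0 <= t -> Cmod (b t) <= beta * (Rabs (d t) + 1)) ->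
  Finite lam <> dinf -> Finite lam0 <> dinf ->
  Rbar_locally p_infty (fun t => Rabs (pi_fn p d b lam0 t) <= M0) ->
  exists B, Rbar_locally p_infty (fun t => Rabs (pi_fn p d b lam t) <= B).
Proof.
  intros Hbeta Hlim Hb Hlam Hlam0 HM0.
  destruct (is_lim_neq_dist_bound d dinf lam Hlim Hlam) as [K HK].
  destruct (is_lim_neq_dist_bound d dinf lam0 Hlim Hlam0) as [K0 HK0].
  exists (M0 + beta ^ 2 * K * K0 * Rabs (lam - lam0)).
  assert (Hpos : Rbar_locally p_infty (fun t => 0 <= t)) by (exists 0; intros; lra).
  eapply filter_imp; [|exact (filter_and _ _ (filter_and _ _ HK HK0) (filter_and _ _ HM0 Hpos))].
  intros t [[Ht1 Ht2] [Ht3 Ht4]].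
  replace (pi_fn p d b lam t)
    with (pi_fn p d b lam0 t + (pi_fn p d b lam t - pi_fn p d b lam0 t)) by ring.
  eapply Rle_trans; [apply Rabs_triang|].
  apply Rplus_le_compat; [exact Ht3|].
  apply Rabs_pi_fn_sub_le; auto.
Qed.

(* [pi(t,lam) = 0] exactly when [lam = Delta(t)]. *)
Lemma pi_fn_neq0 (p d : R -> R) (b : R -> C) (dinf : Rbar) (lam t : R) :
  0 <= t -> 0 < p t -> d t <> lam -> admissible p d b dinf lam -> pi_fn p d b lam t <> 0.
Proof.
  intros Ht Hp Hd [Hcl _] E. apply Hcl. intros eps Heps.
  exists lam. split; [|rewrite Rminus_eq_0, Rabs_R0; exact Heps].
  exists t. split; [exact Ht|].
  unfold pi_fn in E. unfold Defs.Delta.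
  assert (Hdl : d t - lam <> 0) by lra.
  replace (Cmod (b t) ^ 2) with (p t * (d t - lam)).
  - field. lra.
  - apply (Rmult_eq_reg_r (/ (d t - lam))); [|apply Rinv_neq_0_compat; exact Hdl].
    rewrite Rmult_assoc, Rinv_r by exact Hdl. unfold Rdiv in E. lra.
Qed.

(* The imaginary part of the function differentiated in [kappa]. *)
Definition coupling_im (d : R -> R) (b c : R -> C) (lam t : R) : R :=
  Im (Cdiv (Cmult (Cconj (b t)) (c t)) (RtoC (d t - lam))).

Lemma Im_rho_div_pi (p d : R -> R) (b c : R -> C) (lam t : R) :
  Im (Cdiv (rho_fn p d b c lam t) (RtoC (pi_fn p d b lam t)))
  = Derive (pi_fn p d b lam) t / pi_fn p d b lam t.
Proof. rewrite Im_Cdiv_RtoC. reflexivity. Qed.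

Lemma Im_kappa_div_pi (p d q : R -> R) (b c : R -> C) (lam t : R) :
  Im (Cdiv (kappa_fn p d q b c lam t) (RtoC (pi_fn p d b lam t)))
  = Derive (coupling_im d b c lam) t / pi_fn p d b lam t.
Proof.
  rewrite Im_Cdiv_RtoC. unfold kappa_fn, CDerive, coupling_im, Cplus, RtoC, Im. simpl.
  rewrite Rplus_0_l. reflexivity.
Qed.

Lemma coupling_im_Re_rho (p d : R -> R) (b c : R -> C) (lam t : R) :
  coupling_im d b c lam t = Re (rho_fn p d b c lam t) / 2.
Proof.
  unfold coupling_im, rho_fn. rewrite Im_Cdiv_RtoC. unfold Re. simpl.
  destruct (b t), (c t). unfold Im, Cmult, Cconj. simpl.
  unfold Rdiv. set (u := / (d t - lam)). field.
Qed.

Lemma Rabs_coupling_im_le (p d : R -> R) (b c : R -> C) (lam t : R) :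
  Rabs (coupling_im d b c lam t) <= Cmod (rho_fn p d b c lam t) / 2.
Proof.
  rewrite (coupling_im_Re_rho p). unfold Rdiv. rewrite Rabs_mult, (Rabs_right (/ 2)) by lra.
  apply Rmult_le_compat_r; [lra|apply re_le_Cmod].
Qed.

Lemma Ck_half_ex_derive (k : nat) (f : R -> R) (t : R) :
  (0 < k)%nat -> Ck_half k f -> 0 <= t -> ex_derive f t.
Proof.
  intros Hk Hf Ht. destruct (Hf t Ht) as [Hder _].
  exact (locally_singleton _ _ (Hder 0%nat Hk)).
Qed.

Lemma pi_fn_ex_derive (p d : R -> R) (b : R -> C) (lam t : R) :
  ex_derive p t -> ex_derive d t ->
  ex_derive (fun s => Re (b s)) t -> ex_derive (fun s => Im (b s)) t ->
  d t <> lam -> ex_derive (pi_fn p d b lam) t.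
Proof.
  intros Hp Hd Hbr Hbi Hlam.
  apply ex_derive_ext with (fun s => p s - (Re (b s) ^ 2 + Im (b s) ^ 2) / (d s - lam));
    [intros s; unfold pi_fn; rewrite Cmod2_alt; reflexivity|].
  apply (ex_derive_minus (K := R_AbsRing) (V := R_NormedModule)); [exact Hp|].
  apply ex_derive_div.
  - apply (ex_derive_plus (K := R_AbsRing) (V := R_NormedModule)); apply ex_derive_pow; assumption.
  - apply (ex_derive_minus (K := R_AbsRing) (V := R_NormedModule)); [exact Hd|apply ex_derive_const].
  - lra.
Qed.

Lemma coupling_im_ex_derive (d : R -> R) (b c : R -> C) (lam t : R) :
  ex_derive d t ->
  ex_derive (fun s => Re (b s)) t -> ex_derive (fun s => Im (b s)) t ->
  ex_derive (fun s => Re (c s)) t -> ex_derive (fun s => Im (c s)) t ->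
  d t <> lam -> ex_derive (coupling_im d b c lam) t.
Proof.
  intros Hd Hbr Hbi Hcr Hci Hlam.
  apply ex_derive_ext with (fun s => (Re (b s) * Im (c s) - Im (b s) * Re (c s)) / (d s - lam)).
  { intros s. unfold coupling_im. rewrite Im_Cdiv_RtoC.
    destruct (b s), (c s). unfold Im, Re, Cmult, Cconj. simpl. f_equal. ring. }
  apply ex_derive_div.
  - apply (ex_derive_minus (K := R_AbsRing) (V := R_NormedModule)); apply ex_derive_mult; assumption.
  - apply (ex_derive_minus (K := R_AbsRing) (V := R_NormedModule)); [exact Hd|apply ex_derive_const].
  - lra.
Qed.

Theorem lemma4p2 (p d q : R -> R) (b c : R -> C) (dinf : Rbar) :
  Ck_half 2 p -> Ck_half 2 d -> Ck_half_C 2 b -> Ck_half_C 1 c -> Ck_half 0 q ->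
  (forall t, 0 <= t -> 0 < p t) ->
  (* (B1) *)
  is_lim d p_infty dinf ->
  (* (B2) *)
  (exists beta gamma, 0 < beta /\ 0 < gamma /\
     forall t, 0 <= t ->
       Cmod (b t) <= beta * (Rabs (d t) + 1) /\ Cmod (c t) <= gamma * (Rabs (d t) + 1)) ->
  (* (B3a) *)
  (exists lam, Finite lam <> dinf /\
     exists tl, 0 <= tl /\ (forall t, tl <= t -> d t <> lam) /\
       exists M, forall t, tl <= t -> Rabs (pi_fn p d b lam t) <= M) ->
  (* (B3b) *)
  (forall lam, admissible p d b dinf lam ->
     exists tl, 0 <= tl /\ (forall t, tl <= t -> d t <> lam) /\
       exists M, forall t, tl <= t ->
         Cmod (rho_fn p d b c lam t) <= M /\
         Cmod (kappa_fn p d q b c lam t) <= M /\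
         Rabs (/ pi_fn p d b lam t) <= M) ->
  (* (C) *)
  (forall lam, admissible p d b dinf lam ->
     (exists L : C, filterlim (fun t => Cdiv (rho_fn p d b c lam t) (RtoC (pi_fn p d b lam t)))
                      (Rbar_locally p_infty) (locally L)) /\
     (exists L : C, filterlim (fun t => Cdiv (kappa_fn p d q b c lam t) (RtoC (pi_fn p d b lam t)))
                      (Rbar_locally p_infty) (locally L))) ->
  forall lam, admissible p d b dinf lam ->
    is_lim (fun t => Derive (pi_fn p d b lam) t / pi_fn p d b lam t) p_infty 0 /\
    (exists L : R, filterlim (fun t => Cdiv (rho_fn p d b c lam t) (RtoC (pi_fn p d b lam t)))
                     (Rbar_locally p_infty) (locally (RtoC L))) /\
    (exists L : R, filterlim (fun t => Cdiv (kappa_fn p d q b c lam t) (RtoC (pi_fn p d b lam t)))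
                     (Rbar_locally p_infty) (locally (RtoC L))).
Proof.
  intros Hp Hd [Hbr Hbi] [Hcr Hci] _ Hpos Hlim [beta [gamma [Hbeta [_ HB2]]]]
    [lam0 [Hlam0 [tl0 [_ [_ [M0 HM0]]]]]] HB3b HC lam Hadm.
  destruct (HB3b lam Hadm) as [tl [Htl [Hdl [M HM]]]].
  destruct (HC lam Hadm) as [[L1 HL1] [L2 HL2]].
  destruct (pi_fn_bounded_shift p d b dinf beta lam lam0 M0) as [B HB];
    [lra|exact Hlim|intros t Ht; apply HB2, Ht|exact (proj2 Hadm)|exact Hlam0
    |exists tl0; intros t Ht; apply HM0; lra|].
  set (P := pi_fn p d b lam) in *. set (g := coupling_im d b c lam).
  assert (Hfar : Rbar_locally p_infty (fun t => 0 <= t /\ d t <> lam /\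
      Cmod (rho_fn p d b c lam t) <= M /\ Rabs (/ P t) <= M))
    by (exists tl; intros t Ht; repeat split; [lra|apply Hdl; lra|apply HM; lra|apply HM; lra]).
  assert (HevP : Rbar_locally p_infty
      (fun t => ex_derive P t /\ P t <> 0 /\ Rabs (P t) <= B /\ Rabs (/ P t) <= M)).
  { eapply filter_imp; [|exact (filter_and _ _ Hfar HB)]. intros t [[Ht [Hdt [_ HPM]]] HPB].
    repeat split; [|apply (pi_fn_neq0 p d b dinf); auto|exact HPB|exact HPM].
    apply pi_fn_ex_derive; [apply (Ck_half_ex_derive 2)..|]; auto. }
  assert (Hevg : Rbar_locally p_infty (fun t => ex_derive g t /\ Rabs (g t) <= M / 2)).
  { eapply filter_imp; [|exact Hfar]. intros t [Ht [Hdt [HrM _]]]. split.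
    - apply coupling_im_ex_derive; [apply (Ck_half_ex_derive 2)|apply (Ck_half_ex_derive 2)
        |apply (Ck_half_ex_derive 2)|apply (Ck_half_ex_derive 1)|apply (Ck_half_ex_derive 1)|];
        auto.
    - eapply Rle_trans; [apply (Rabs_coupling_im_le p)|lra]. }
  assert (HlogP : is_lim (fun t => Derive P t / P t) p_infty (Im L1))
    by (eapply is_lim_ext; [intros t; apply Im_rho_div_pi|exact (is_lim_Im _ _ HL1)]).
  assert (Hg : is_lim (fun t => Derive g t / P t) p_infty (Im L2))
    by (eapply is_lim_ext; [intros t; apply Im_kappa_div_pi|exact (is_lim_Im _ _ HL2)]).
  assert (E1 : Im L1 = 0) by exact (log_derive_lim_eq0 P B M HevP _ HlogP).
  rewrite E1 in HlogP.
  assert (E2 : Im L2 = 0) by exact (derive_div_lim_eq0 P g B M (M / 2) HevP Hevg _ HlogP Hg).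
  split; [exact HlogP|split].
  - exists (Re L1). destruct L1. simpl in E1. subst. exact HL1.
  - exists (Re L2). destruct L2. simpl in E2. subst. exact HL2.
Qed.
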